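(* In the Mallows setting: - $W(N,0)=\theta^{N-1}[N-1]_\theta!$ for all $N\ge1$; - for all $N\ge2$ and $1\le k\le N-1$, $$W(N,k)=\theta^{N-k-1}\,[N-1]_\theta!\,\sum_{i=k}^{N-1}\frac{[k]_\theta}{[i]_\theta}.$$
   Context: Permutations of $\{1,\dots,N\}$ are written in one-line notation; $\mathfrak S_N$ is the set of all of them. An entry $\pi_j$ is a left-to-right maximum if $\pi_j>\pi_i$ for all $i<j$; $\mathrm{inv}(\pi)$ is the number of pairs $i<j$ with $\pi_i>\pi_j$. Let $\theta>0$. For $0\le k\le N-1$, a permutation $\pi\in\mathfrak S_N$ is $k$-winnable if the first index $j>k$ such that $\pi_j$ is a left-to-right maximum satisfies $\pi_j=N$. Mallows setting: - $W(N,k)=\sum_{k\text{-winnable }\pi\in\mathfrak S_N}\theta^{\mathrm{inv}(\pi)}$; - $[m]_\theta=1+\theta+\cdots+\theta^{m-1}$; - $[m]_\theta!=[1]_\theta\cdots[m]_\theta$, with $[0]_\theta!=1$. *)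

From HB Require Import structures.
From mathcomp Require Import all_boot all_order all_algebra all_fingroup.
Set Implicit Arguments. Unset Strict Implicit. Unset Printing Implicit Defensive.
Import Order.TTheory GRing.Theory Num.Theory.

(* Convention: a permutation of {1..N} is modelled as s : 'S_N (a permutation
   of 'I_N = {0..N-1}); position j (1-based) is the ordinal j-1 and the value
   pi_j (1-based) is (s (j-1)) + 1.  So the value N corresponds to N.-1. *)

Definition ltr_max (N : nat) (s : 'S_N) (j : 'I_N) : bool :=
  [forall i : 'I_N, (i < j)%N ==> (s i < s j)%N].

Definition inv (N : nat) (s : 'S_N) : nat :=
  #|[set p : 'I_N * 'I_N | (p.1 < p.2)%N && (s p.2 < s p.1)%N]|.

(* k-winnable: the first 1-based index j > k (i.e. 0-based index >= k) that is
   a left-to-right maximum exists and carries the value N (0-based: N.-1). *)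
Definition winnable (N k : nat) (s : 'S_N) : bool :=
  [exists j : 'I_N,
     [&& (k <= j)%N, ltr_max s j,
         [forall i : 'I_N, ((k <= i)%N && (i < j)%N) ==> ~~ ltr_max s i]
       & (val (s j) == N.-1)]].

Local Open Scope ring_scope.

Definition W (R : nzRingType) (theta : R) (N k : nat) : R :=
  \sum_(s : 'S_N | winnable k s) theta ^+ inv s.

Definition qint (R : nzRingType) (theta : R) (m : nat) : R :=
  \sum_(i < m) theta ^+ i.

Definition qfact (R : nzRingType) (theta : R) (m : nat) : R :=
  \prod_(1 <= i < m.+1) qint theta i.

From Pilot Require Import Defs.
From HB Require Import structures.
From mathcomp Require Import all_boot all_order all_algebra all_fingroup.
From mathcomp Require Import ring.
Import Order.TTheory GRing.Theory Num.Theory.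
Set Implicit Arguments. Unset Strict Implicit. Unset Printing Implicit Defensive.

(* Through its Lehmer code c (c_j = number of earlier entries larger than the
   j-th one), a permutation has inv = sum_j c_j, its j-th entry is a
   left-to-right maximum iff c_j = 0, and the entry N is its last left-to-right
   maximum.  Hence it is k-winnable iff exactly one digit c_j with j >= k
   vanishes.  As the Lehmer code is a bijection onto the product of the ranges
   {0..j}, W(N,k) becomes a sum over that position j of products of independent
   geometric sums: [i+1] for i < k, 1 at i = j, and theta [i] otherwise; the
   product equals theta^(N-k-1) [N-1]! [k]/[j]. *)

Section LehmerCode.

Variable n : nat.
Implicit Types (s t : 'S_n) (i j : 'I_n).

Definition lehmer s j : nat := #|[set i : 'I_n | (i < j)%N && (s j < s i)%N]|.

Lemma lehmer_le s j : (lehmer s j <= j)%N.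
Proof.
rewrite /lehmer cardE -(size_map (@nat_of_ord n)) -[X in (_ <= X)%N](size_iota 0 j).
apply: (uniq_leq_size (s2 := iota 0 j)); first by rewrite (map_inj_uniq val_inj) enum_uniq.
by move=> y /mapP[i]; rewrite mem_enum inE mem_iota add0n => /andP[lt_ij _] ->.
Qed.

Lemma lehmer_lt s j : (lehmer s j < n)%N.
Proof. exact: leq_ltn_trans (lehmer_le s j) (ltn_ord j). Qed.

Definition lehmer_code s : {ffun 'I_n -> 'I_n} := [ffun j => Ordinal (lehmer_lt s j)].

Lemma lehmerE s j :
  lehmer s j = #|[set y in s @: [set i : 'I_n | (i <= j)%N] | (s j < y)%N]|.
Proof.
suff -> : [set y in s @: [set i : 'I_n | (i <= j)%N] | (s j < y)%N] =
          s @: [set i : 'I_n | (i < j)%N && (s j < s i)%N].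
  by rewrite card_imset //; apply: perm_inj.
apply/setP => y; rewrite inE; apply/andP/imsetP => [[/imsetP[i]] | [i]].
  rewrite inE leq_eqVlt => /orP[/eqP/val_inj -> -> | lt_ij -> lt_s]; first by rewrite ltnn.
  by exists i; rewrite // inE lt_ij.
rewrite inE => /andP[lt_ij lt_s] ->; split=> //.
by apply/imsetP; exists i; rewrite // inE ltnW.
Qed.

Lemma card_gt_inj (V : {set 'I_n}) :
  {in V &, injective (fun x : 'I_n => #|[set y in V | (x < y)%N]|)}.
Proof.
suff lt_card x y : x \in V -> y \in V -> (x < y)%N ->
    (#|[set z in V | (y < z)%N]| < #|[set z in V | (x < z)%N]|)%N.
  move=> x y Vx Vy /= eq_card_xy; apply: val_inj.
  case: (ltngtP x y) => // [lt_xy | lt_yx].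
    by have := lt_card _ _ Vx Vy lt_xy; rewrite eq_card_xy ltnn.
  by have := lt_card _ _ Vy Vx lt_yx; rewrite eq_card_xy ltnn.
move=> Vx Vy lt_xy; apply: proper_card; apply/properP; split.
  by apply/subsetP => z; rewrite !inE => /andP[-> /(ltn_trans lt_xy)].
by exists y; rewrite !inE ?Vy ?lt_xy ?ltnn.
Qed.

Lemma perm_prefix_image s t j : (forall i, (j < i)%N -> s i = t i) ->
  s @: [set i : 'I_n | (i <= j)%N] = t @: [set i : 'I_n | (i <= j)%N].
Proof.
move=> eq_suffix; apply/eqP.
rewrite eqEcard !card_imset ?leqnn ?andbT; try exact: perm_inj.
apply/subsetP => y /imsetP[i]; rewrite inE => le_ij ->.
apply/imsetP; exists (t^-1 (s i))%g; last by rewrite permKV.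
rewrite inE; case: leqP => // lt_j; have := eq_suffix _ lt_j.
by rewrite permKV => /perm_inj eq_i; move: lt_j; rewrite eq_i ltnNge le_ij.
Qed.

Lemma lehmer_code_inj : injective lehmer_code.
Proof.
move=> s t eq_code; apply/permP => x; apply/eqP/negPn/negP => neq_x.
have [j neq_j max_j] := @arg_maxnP _ x (fun i => s i != t i) val neq_x.
have eq_suffix i : (j < i)%N -> s i = t i.
  by move=> lt_ji; apply/eqP/negPn/negP => /max_j /=; rewrite leqNgt lt_ji.
have eq_lehmer : lehmer s j = lehmer t j.
  by have := congr1 (fun f : {ffun 'I_n -> 'I_n} => val (f j)) eq_code; rewrite !ffunE.
have im_j (u : 'S_n) : u j \in u @: [set i : 'I_n | (i <= j)%N] by apply: imset_f; rewrite inE.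
have sj_in : s j \in t @: [set i : 'I_n | (i <= j)%N].
  by rewrite -(perm_prefix_image eq_suffix) im_j.
move: eq_lehmer; rewrite !lehmerE (perm_prefix_image eq_suffix).
by move=> /(card_gt_inj sj_in (im_j t)) eq_j; rewrite eq_j eqxx in neq_j.
Qed.

Definition lehmer_bound (i : 'I_n) : pred 'I_n := fun x => (x <= i)%N.

Lemma lehmer_code_family s : lehmer_code s \in family lehmer_bound.
Proof. by apply/familyP => j; rewrite ffunE; apply: lehmer_le. Qed.

Lemma card_lehmer_bound i : #|lehmer_bound i| = i.+1.
Proof.
rewrite -sum1_card (eq_bigl (fun x : 'I_n => (x < i.+1)%N)) //.
by rewrite (big_ord_narrow (ltn_ord i)) sum1_card card_ord.
Qed.

Lemma card_lehmer_family : #|family lehmer_bound| = n`!.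
Proof.
rewrite -sum1_card (eq_bigr (fun f => \prod_(i : 'I_n) 1)%N); last by rewrite big1.
rewrite -(bigA_distr_big_dep _ (fun _ _ => 1%N)).
under eq_bigr do rewrite sum1_card card_lehmer_bound.
by rewrite fact_prod big_add1 big_mkord.
Qed.

Lemma sum_perm_lehmer (R : nmodType) (G : {ffun 'I_n -> 'I_n} -> R) :
  (\sum_(s : 'S_n) G (lehmer_code s) = \sum_(f in family lehmer_bound) G f)%R.
Proof.
have im_code : lehmer_code @: setT = [set f | f \in family lehmer_bound].
  apply/eqP; rewrite eqEcard cardsE card_lehmer_family card_imset; last first.
    exact: lehmer_code_inj.
  rewrite cardsT card_Sn leqnn andbT.
  by apply/subsetP => _ /imsetP[s _ ->]; rewrite inE lehmer_code_family.
rewrite [RHS](eq_bigl (fun f => f \in lehmer_code @: setT)); last first.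
  by move=> f; rewrite im_code inE.
rewrite big_imset /=; last by move=> s t _ _; apply: lehmer_code_inj.
by apply: eq_bigl => s; rewrite inE.
Qed.

Lemma ltr_maxE s j : ltr_max s j = (lehmer s j == 0%N).
Proof.
rewrite /ltr_max /lehmer cards_eq0; apply/forallP/eqP => [max_j | no_larger i].
  apply/setP => i; rewrite !inE; apply/negbTE/negP => /andP[lt_ij lt_s].
  by have := implyP (max_j i) lt_ij; rewrite ltnNge (ltnW lt_s).
apply/implyP => lt_ij; have : i \notin [set i : 'I_n | (i < j)%N && (s j < s i)%N].
  by rewrite no_larger inE.
rewrite inE lt_ij /= -leqNgt leq_eqVlt => /orP[/eqP/val_inj/perm_inj eq_ji | //].
by move: lt_ij; rewrite eq_ji ltnn.
Qed.

Lemma max_last_ltr_max s j :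
  (val (s j) == n.-1) = ltr_max s j && [forall i : 'I_n, (j < i)%N ==> ~~ ltr_max s i].
Proof.
have le_max (i : 'I_n) : (s i <= n.-1)%N by rewrite -ltnS (ltn_predK (ltn_ord j)).
have max_ltr (i : 'I_n) : val (s i) == n.-1 -> ltr_max s i.
  move=> /eqP s_i; have {}s_i : nat_of_ord (s i) = n.-1 := s_i.
  apply/forallP => i'; apply/implyP => lt_i'i.
  have neq_i : s i' != s i by apply/eqP => /perm_inj eq_i; move: lt_i'i; rewrite eq_i ltnn.
  by rewrite ltn_neqAle s_i le_max andbT -s_i.
apply/idP/andP => [s_j | [ltr_j /forallP later_j]].
  split; first exact: max_ltr.
  apply/forallP => i; apply/implyP => lt_ji; apply/negP => /forallP/(_ j).
  by rewrite lt_ji (eqP s_j) ltnNge le_max.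
have lt_n : (n.-1 < n)%N by rewrite (ltn_predK (ltn_ord j)).
pose m := (s^-1 (Ordinal lt_n))%g; have s_m : val (s m) = n.-1 by rewrite permKV.
case: (ltngtP m j) => [lt_mj | lt_jm | /val_inj <-]; last by rewrite s_m.
- by have := implyP (forallP ltr_j m) lt_mj; rewrite s_m ltnNge le_max.
- by have := implyP (later_j m) lt_jm; rewrite max_ltr // s_m.
Qed.

Definition zero_only_at k j (f : {ffun 'I_n -> 'I_n}) : bool :=
  [forall i : 'I_n, (k <= i)%N ==> ((f i == 0 :> nat) == (i == j))].

Lemma winnableE k s :
  winnable k s = [exists j : 'I_n, (k <= j)%N && zero_only_at k j (lehmer_code s)].
Proof.
have ltr_code (i : 'I_n) : ltr_max s i = (lehmer_code s i == 0 :> nat).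
  by rewrite ffunE ltr_maxE.
apply/existsP/existsP => -[j].
  case/and4P => le_kj ltr_j first_j /[!max_last_ltr_max] /andP[_ /forallP last_j].
  exists j; rewrite le_kj; apply/forallP => i; apply/implyP => le_ki; rewrite -ltr_code.
  case: (ltngtP i j) => [lt_ij | lt_ji | /val_inj ->]; last by rewrite ltr_j eqxx.
  - by rewrite (negbTE (implyP (forallP first_j i) _)) ?le_ki // -val_eqE (ltn_eqF lt_ij).
  - by rewrite (negbTE (implyP (last_j i) lt_ji)) -val_eqE (gtn_eqF lt_ji).
case/andP => le_kj /forallP zero_j; exists j.
have ltr_i (i : 'I_n) : (k <= i)%N -> ltr_max s i = (i == j).
  by move=> le_ki; rewrite ltr_code (eqP (implyP (zero_j i) le_ki)).
rewrite le_kj ltr_i ?eqxx // max_last_ltr_max ltr_i ?eqxx //=; apply/andP; split.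
  apply/forallP => i; apply/implyP => /andP[le_ki lt_ij].
  by rewrite ltr_i // -val_eqE (ltn_eqF lt_ij).
apply/forallP => i; apply/implyP => lt_ji.
by rewrite ltr_i -?val_eqE ?(gtn_eqF lt_ji) // (leq_trans le_kj (ltnW lt_ji)).
Qed.

End LehmerCode.

Lemma zero_only_at_uniq n k (f : {ffun 'I_n -> 'I_n}) (j j' : 'I_n) :
  (k <= j)%N -> zero_only_at k j f -> zero_only_at k j' f -> j = j'.
Proof.
move=> le_kj /forallP/(_ j) zero_j /forallP/(_ j) zero_j'.
rewrite le_kj eqxx /= in zero_j zero_j'.
by move: zero_j'; rewrite (eqP zero_j) eq_sym eqb_id => /eqP.
Qed.

Lemma inv_lehmer n (s : 'S_n) : Defs.inv s = (\sum_(j : 'I_n) lehmer s j)%N.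
Proof.
rewrite /Defs.inv -sum1_card.
rewrite (eq_bigl (fun p : 'I_n * 'I_n => xpredT p.1 && ((p.1 < p.2)%N && (s p.2 < s p.1)%N)));
  last by move=> p; rewrite inE.
rewrite -(pair_big_dep xpredT (fun i j : 'I_n => (i < j)%N && (s j < s i)%N) (fun _ _ => 1%N)).
rewrite (exchange_big_dep xpredT) //=; apply: eq_bigr => j _.
by rewrite /lehmer -sum1_card; apply: eq_bigl => i; rewrite inE.
Qed.

Local Open Scope ring_scope.

Lemma winnable_indicator (R : nzRingType) n k (s : 'S_n) :
  (winnable k s)%:R = \sum_(j : 'I_n | (k <= j)%N) (zero_only_at k j (lehmer_code s))%:R :> R.
Proof.
rewrite winnableE; case: existsP => [[j /andP[le_kj zero_j]] | no_j].
  rewrite (bigD1 j) //= zero_j big1 ?addr0 // => i /andP[le_ki neq_ij].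
  case zero_i: (zero_only_at _ _ _) => //.
  by case/eqP: neq_ij; apply: zero_only_at_uniq le_ki zero_i zero_j.
rewrite big1 // => j le_kj; case zero_j: (zero_only_at _ _ _) => //.
by case: no_j; exists j; rewrite le_kj.
Qed.

Lemma prodr_nat_bool (R : comNzRingType) (I : finType) (b : I -> bool) :
  \prod_(i : I) (b i)%:R = [forall i, b i]%:R :> R.
Proof.
have andb_morph : {morph nat_of_bool : x y / x && y >-> (x * y)%N} by move=> x y; rewrite mulnb.
by rewrite -natr_prod -(big_morph _ andb_morph (erefl : nat_of_bool true = 1%N)) big_andE.
Qed.

Definition lehmer_weight (R : nzRingType) (theta : R) (k j i x : nat) : R :=
  theta ^+ x * ((k <= i)%N ==> ((x == 0)%N == (i == j)))%:R.

Definition W_factor (R : nzRingType) (theta : R) (k j i : nat) : R :=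
  if (i < k)%N then qint theta i.+1 else if i == j then 1 else theta * qint theta i.

Lemma sum_lehmer_weight (R : nzRingType) (theta : R) n k j (i : 'I_n) :
  \sum_(x : 'I_n | lehmer_bound i x) lehmer_weight theta k j i x = W_factor theta k j i.
Proof.
rewrite (eq_bigl (fun x : 'I_n => (x < i.+1)%N)) // (big_ord_narrow (ltn_ord i)) /=.
rewrite /W_factor /lehmer_weight; case: ltnP => [lt_ik | le_ki] /=.
  by apply: eq_bigr => x _; rewrite mulr1.
rewrite big_ord_recl /= expr0 mul1r; case: (i == j :> nat) => /=.
  by rewrite big1 ?addr0 // => x _; rewrite mulr0.
rewrite add0r /qint big_distrr /=.
by apply: eq_bigr => x _; rewrite mulr1 exprS.
Qed.

Lemma W_sum_prod (R : comNzRingType) (theta : R) n k :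
  W theta n k = \sum_(j : 'I_n | (k <= j)%N) \prod_(i : 'I_n) W_factor theta k j i.
Proof.
have weight_code s j : theta ^+ Defs.inv s * (zero_only_at k j (lehmer_code s))%:R =
    \prod_(i : 'I_n) lehmer_weight theta k j i (lehmer_code s i).
  rewrite big_split /= prodrXr prodr_nat_bool inv_lehmer.
  by congr (_ ^+ _ * _); apply: eq_bigr => i _; rewrite ffunE.
rewrite /W big_mkcond /=.
under eq_bigr => s _ do rewrite -mulrb -mulr_natr winnable_indicator big_distrr /=.
rewrite exchange_big /=; apply: eq_bigr => j _.
under eq_bigr do rewrite weight_code.
rewrite (sum_perm_lehmer (fun f => \prod_(i : 'I_n) lehmer_weight theta k j i (f i))).
rewrite -(bigA_distr_big_dep _ (fun i x : 'I_n => lehmer_weight theta k j i x)).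
by apply: eq_bigr => i _; apply: sum_lehmer_weight.
Qed.

Lemma qint_gt0 (R : numDomainType) (theta : R) m :
  0 < theta -> (0 < m)%N -> 0 < qint theta m.
Proof.
move=> theta_gt0; case: m => // m _; rewrite /qint big_ord_recl expr0 ltr_pwDl //.
by apply: sumr_ge0 => i _; rewrite exprn_ge0 // ltW.
Qed.

Lemma prod_W_factor_mul (R : comNzRingType) (theta : R) N k (j : 'I_N) :
  (0 < k)%N -> (k <= j)%N ->
  (\prod_(i < N) W_factor theta k j i) * (theta * qint theta j) =
  theta ^+ (N - k) * qint theta k * qfact theta (N - 1).
Proof.
move=> k_gt0 le_kj; have le_kN : (k <= N)%N by apply: leq_trans le_kj (ltnW (ltn_ord j)).
pose G i := if (i < k)%N then qint theta i.+1 else theta * qint theta i.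
have prod_G : (\prod_(i < N) W_factor theta k j i) * (theta * qint theta j) =
    \prod_(i < N) G i.
  rewrite (bigD1 j) //= [RHS](bigD1 j) //= {1}/W_factor /G !ltnNge le_kj eqxx mul1r mulrC.
  congr (_ * _); apply: eq_bigr => i neq_ij; rewrite /W_factor; case: ltnP => // _.
  by case: eqP => // /val_inj eq_ij; rewrite eq_ij eqxx in neq_ij.
rewrite prod_G -(big_mkord xpredT G) (big_cat_nat (leq0n k) le_kN) /=.
rewrite (eq_big_nat _ _ (m := 0) (n := k) (F2 := fun i => qint theta i.+1)); last first.
  by move=> i /andP[_ lt_ik]; rewrite /G lt_ik.
rewrite (eq_big_nat _ _ (m := k) (n := N) (F2 := fun i => theta * qint theta i)); last first.
  by move=> i /andP[le_ki _]; rewrite /G ltnNge le_ki.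
have fact_k :
    \prod_(0 <= i < k) qint theta i.+1 = (\prod_(1 <= i < k) qint theta i) * qint theta k.
  by rewrite -big_nat_recr // big_add1.
have fact_N : qfact theta (N - 1) =
    (\prod_(1 <= i < k) qint theta i) * \prod_(k <= i < N) qint theta i.
  by rewrite /qfact subn1 prednK ?(big_cat_nat k_gt0 le_kN) // (leq_trans k_gt0 le_kN).
by rewrite big_split /= prodr_const_nat fact_k fact_N; ring.
Qed.

Lemma prod_W_factor (F : fieldType) (theta : F) N k (j : 'I_N) :
  (0 < k)%N -> (k <= j)%N -> theta != 0 -> qint theta j != 0 ->
  \prod_(i < N) W_factor theta k j i =
  theta ^+ (N - k - 1) * qfact theta (N - 1) * (qint theta k / qint theta j).
Proof.
move=> k_gt0 le_kj theta_neq0 qj_neq0.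
apply: (mulIf (mulf_neq0 theta_neq0 qj_neq0)); rewrite prod_W_factor_mul //.
have -> : (N - k = (N - k - 1).+1)%N by rewrite subn1 prednK // subn_gt0 (leq_ltn_trans le_kj).
by rewrite subSS subn0 exprS; move: (theta ^+ _) => x; field.
Qed.

Lemma W_zero (R : comNzRingType) (theta : R) N : W theta N.+1 0 = theta ^+ N * qfact theta N.
Proof.
rewrite W_sum_prod (bigD1 ord0) //= [X in _ + X]big1 => [|j neq_j0]; last first.
  have /negbTE j_neq0 : (j != 0 :> nat) := neq_j0.
  by rewrite big_ord_recl /W_factor /= eq_sym j_neq0 /qint big_ord0 mulr0 mul0r.
rewrite addr0 big_ord_recl /W_factor /= mul1r big_split /= prodr_const card_ord.
by rewrite /qfact big_add1 /= big_mkord.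
Qed.

Unset Implicit Arguments.

Theorem corollary6p4 (R : realFieldType) (theta : R) (htheta : 0 < theta) :
  (forall N : nat, (1 <= N)%N ->
     W theta N 0 = theta ^+ (N - 1) * qfact theta (N - 1)) /\
  (forall N k : nat, (2 <= N)%N -> (1 <= k <= N - 1)%N ->
     W theta N k =
       theta ^+ (N - k - 1) * qfact theta (N - 1) *
       \sum_(k <= i < N) (qint theta k / qint theta i)).
Proof.
split=> [[|N] // _ | N k _ /andP[k_gt0 _]]; first by rewrite W_zero subn1.
rewrite W_sum_prod big_distrr /= big_geq_mkord; apply: eq_bigr => j le_kj.
rewrite prod_W_factor ?gt_eqF // qint_gt0 //.
exact: leq_trans k_gt0 le_kj.
Qed.
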